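(* Let $m\ge1$. For any $x=(x_0,\dots,x_m)\in\mathbb{R}^{m+1}$, $$\sum_{i=0}^{2m}(x*x)_i=\Big(\sum_{i=0}^{m}x_i\Big)^2.$$ Moreover, if $y\in\mathbb{R}^{2m+1}_+$ and $x^\star\in\mathbb{R}^{m+1}_+$ is a minimizer of $x\mapsto\mathcal{I}(y\|x*x)$ over $\mathbb{R}^{m+1}_+$, then $$\sum_{i=0}^{2m}(x^\star*x^\star)_i=\Big(\sum_{i=0}^{m}x^\star_i\Big)^2=\sum_{i=0}^{2m}y_i.$$
   Context: For $x\in\mathbb{R}^{m+1}$ set $x_k=0$ for $k<0$ and $k>m$, and $(x*x)_i=\sum_{j=0}^{i}x_{i-j}x_j$ for $i=0,\dots,2m$. For nonnegative vectors $u,v$ of equal length, $\mathcal{I}(u\|v)=\sum_i\big(u_i\log\frac{u_i}{v_i}-u_i+v_i\big)$ if $u_i=0$ whenever $v_i=0$ (convention $0\log0=0$), and $+\infty$ otherwise. *)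

From HB Require Import structures.
From mathcomp Require Import all_boot all_order all_algebra.
From mathcomp Require Import all_classical all_reals all_analysis.
Set Implicit Arguments. Unset Strict Implicit. Unset Printing Implicit Defensive.
Import Order.TTheory GRing.Theory Num.Theory.
Local Open Scope ring_scope.

(* Zero extension of x in R^{m+1} (indices 0..m) to all of nat:
   x_k = 0 for k > m (negative indices never arise below since i - j >= 0). *)
Definition ext (R : realType) (m : nat) (x : 'I_m.+1 -> R) (k : nat) : R :=
  match ltnP k m.+1 with
  | LtnNotGeq Hk => x (Ordinal Hk)
  | _ => 0
  end.

Definition selfconv (R : realType) (m : nat) (x : 'I_m.+1 -> R) : 'I_(m.*2).+1 -> R :=
  fun i => \sum_(j < i.+1) ext x (i - j) * ext x j.

Definition Idiv (R : realType) (n : nat) (u v : 'I_n -> R) : \bar R :=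
  if [forall i, (v i == 0) ==> (u i == 0)] then
    (\sum_(i < n) ((if u i == 0 then 0 else u i * ln (u i / v i)) - u i + v i))%:E
  else +oo%E.

From HB Require Import structures.
From mathcomp Require Import all_boot all_order all_algebra.
From mathcomp Require Import all_classical all_reals all_analysis.
From mathcomp Require Import ring lra zify.
Import Order.TTheory GRing.Theory Num.Theory.
Local Open Scope ring_scope.

(* The convolution identity is the evaluation at 1 of [p * p], where [p] is the
   polynomial with coefficients [x].  Rescaling a minimizer [xs] by [sqrt s]
   multiplies [v = xs * xs] by [s] and changes the divergence by
   [(s - 1) V - Y ln s], where [V = sum v] and [Y = sum y]; this function of
   [s] takes a negative value unless [Y = V]. *)

Section SelfConvolution.
Variables (R : realType) (m : nat).
Implicit Types (x : 'I_m.+1 -> R).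

Lemma ext_ord x (i : 'I_m.+1) : ext x i = x i.
Proof.
rewrite /ext; case: ltnP => [?|]; first by congr x; apply: val_inj.
by rewrite leqNgt ltn_ord.
Qed.

Lemma ext_out x k : (m < k)%N -> ext x k = 0.
Proof. by rewrite /ext; case: ltnP => // lt_km; rewrite leqNgt lt_km. Qed.

Lemma ext_scale t x k : ext (fun i => t * x i) k = t * ext x k.
Proof. by rewrite /ext; case: ltnP => //; rewrite mulr0. Qed.

Lemma ext_ge0 x k : (forall i, 0 <= x i) -> 0 <= ext x k.
Proof. by rewrite /ext; case: ltnP. Qed.

Lemma ext_gt0 x k : (forall i, 0 < x i) -> (k <= m)%N -> 0 < ext x k.
Proof. by move=> x_gt0 le_km; rewrite /ext; case: ltnP; rewrite // ltnNge le_km. Qed.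

Lemma sum_selfconv x :
  \sum_(i < (m.*2).+1) selfconv x i = (\sum_(i < m.+1) x i) ^+ 2.
Proof.
pose p : {poly R} := \poly_(i < m.+1) ext x i.
have coef_p k : p`_k = ext x k.
  by rewrite coef_poly; case: ltnP => // lt_mk; rewrite ext_out.
have size_pp : (size (p * p)%R <= (m.*2).+1)%N.
  have size_p : (size p <= m.+1)%N by exact: size_poly.
  by apply: leq_trans (size_polyMleq p p) _; rewrite -addnn; lia.
have pp1 : (p * p).[1] = \sum_(i < (m.*2).+1) selfconv x i.
  rewrite (horner_coef_wide _ size_pp); apply: eq_bigr => i _.
  rewrite expr1n mulr1 coefM (reindex_inj rev_ord_inj) /=.
  by apply: eq_bigr => j _; rewrite !coef_p subKn 1?mulrC // -ltnS.
have p1 : p.[1] = \sum_(i < m.+1) x i.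
  rewrite (horner_coef_wide _ (size_poly _ _)); apply: eq_bigr => i _.
  by rewrite expr1n mulr1 coef_p ext_ord.
by rewrite -pp1 hornerM p1 expr2.
Qed.

Lemma selfconv_scale t x :
  selfconv (fun i => t * x i) = (fun i => t ^+ 2 * selfconv x i).
Proof.
apply: funext => i; rewrite /selfconv mulr_sumr; apply: eq_bigr => j _.
by rewrite !ext_scale; ring.
Qed.

Lemma selfconv_ge0 x i : (forall i, 0 <= x i) -> 0 <= selfconv x i.
Proof. by move=> x_ge0; apply: sumr_ge0 => j _; rewrite mulr_ge0 ?ext_ge0. Qed.

(* The term [j = min(i, m)] has both indices in [0, m]. *)
Lemma selfconv_gt0 x i : (forall i, 0 < x i) -> 0 < selfconv x i.
Proof.
move=> x_gt0; have le_i2m : (i <= m + m)%N by rewrite addnn -ltnS.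
pose j0 : 'I_i.+1 := inord (minn i m).
have j0E : nat_of_ord j0 = minn i m by rewrite inordK // ltnS geq_minl.
rewrite /selfconv (bigD1 j0) //= ltr_pwDl ?mulr_gt0 ?ext_gt0 //; try lia.
by apply: sumr_ge0 => j _; rewrite mulr_ge0 ?ext_ge0 // => k; apply: ltW.
Qed.

End SelfConvolution.

Section Divergence.
Variables (R : realType) (n : nat).
Implicit Types (u v : 'I_n -> R).

Lemma Idiv_lt_pinfty u v :
  (Idiv u v < +oo)%E = [forall i, (v i == 0) ==> (u i == 0)].
Proof. by rewrite /Idiv; case: ifP => _; rewrite ?ltey ?ltxx. Qed.

Lemma IdivZr u v s : (forall i, 0 <= u i) -> (forall i, 0 <= v i) -> 0 < s ->
  Idiv u (fun i => s * v i) =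
  (Idiv u v + ((s - 1) * \sum_i v i - (\sum_i u i) * ln s)%:E)%E.
Proof.
move=> u_ge0 v_ge0 s_gt0.
have suppZ : [forall i, (s * v i == 0) ==> (u i == 0)] =
             [forall i, (v i == 0) ==> (u i == 0)].
  by apply: eq_forallb => i; rewrite mulf_eq0 gt_eqF.
rewrite /Idiv suppZ; case: ifP => [/forallP supp|_]; last by rewrite addye.
rewrite -EFinD; congr EFin.
rewrite mulr_sumr mulr_suml -sumrB -big_split /=.
apply: eq_bigr => i _; have [->|ui_neq0] := eqVneq (u i) 0; first by ring.
have vi_gt0 : 0 < v i.
  by rewrite lt_def v_ge0 andbT; apply: contra ui_neq0 => /(implyP (supp i)).
have ui_gt0 : 0 < u i by rewrite lt_def ui_neq0 u_ge0.
by rewrite !ln_div ?posrE ?mulr_gt0 // lnM ?posrE //; ring.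
Qed.

End Divergence.

Section ScaleOptimality.
Variable R : realType.

Lemma ln_ge1BV {s : R} : 0 < s -> 1 - s^-1 <= ln s.
Proof.
move=> s_gt0; have sV_gt0 : 0 < s^-1 by rewrite invr_gt0.
have sV1_gt : -1 < s^-1 - 1 by lra.
by have := le_ln1Dx sV1_gt; rewrite addrCA subrr addr0 lnV ?posrE //; lra.
Qed.

Lemma scale_gap_lt0 (Y V s : R) : 0 <= Y -> 0 < s ->
  (s - 1) * (s * V - Y) < 0 -> (s - 1) * V - Y * ln s < 0.
Proof.
move=> Y_ge0 s_gt0 neg; rewrite -(pmulr_rlt0 _ s_gt0).
have sln : s - 1 <= s * ln s.
  have := ler_wpM2l (ltW s_gt0) (ln_ge1BV s_gt0).
  by rewrite mulrBr mulr1 mulfV ?gt_eqF.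
have := ler_wpM2l Y_ge0 sln; nra.
Qed.

Lemma scale_optimal_eq (Y V : R) : 0 <= Y -> 0 <= V ->
  (forall s, 0 < s -> 0 <= (s - 1) * V - Y * ln s) -> Y = V.
Proof.
move=> Y_ge0 V_ge0 gap_ge0; case: (ltgtP Y V) => // [lt_YV|lt_VY]; exfalso.
- pose s := (Y + V) / (2 * V).
  have sE : s * (2 * V) = Y + V by rewrite mulfVK // gt_eqF //; lra.
  have s_gt0 : 0 < s by rewrite divr_gt0 //; lra.
  have s_lt1 : s < 1 by nra.
  have neg : (s - 1) * (s * V - Y) < 0 by rewrite nmulr_rlt0 ?subr_lt0 //; lra.
  by have := gap_ge0 s s_gt0; rewrite leNgt scale_gap_lt0.
- pose s := 2 * Y / (Y + V).
  have sE : s * (Y + V) = 2 * Y by rewrite mulfVK // gt_eqF //; lra.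
  have s_gt0 : 0 < s by rewrite divr_gt0 //; lra.
  have s_gt1 : 1 < s by nra.
  have neg : (s - 1) * (s * V - Y) < 0 by rewrite pmulr_rlt0 ?subr_gt0 //; nra.
  by have := gap_ge0 s s_gt0; rewrite leNgt scale_gap_lt0.
Qed.

End ScaleOptimality.

Theorem proposition2 (R : realType) (m : nat) (hm : (1 <= m)%N) :
  (forall x : 'I_m.+1 -> R,
      \sum_(i < (m.*2).+1) selfconv x i = (\sum_(i < m.+1) x i) ^+ 2) /\
  (forall (y : 'I_(m.*2).+1 -> R) (xs : 'I_m.+1 -> R),
      (forall i, 0 <= y i) ->
      (forall i, 0 <= xs i) ->
      (forall x : 'I_m.+1 -> R, (forall i, 0 <= x i) ->
          (Idiv y (selfconv xs) <= Idiv y (selfconv x))%E) ->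
      \sum_(i < (m.*2).+1) selfconv xs i = (\sum_(i < m.+1) xs i) ^+ 2 /\
      (\sum_(i < m.+1) xs i) ^+ 2 = \sum_(i < (m.*2).+1) y i).
Proof.
split=> [|y xs y_ge0 xs_ge0 xs_min]; first exact: sum_selfconv.
rewrite -sum_selfconv; split=> //.
have v_ge0 i : 0 <= selfconv xs i by exact: selfconv_ge0.
have supp : [forall i, (selfconv xs i == 0) ==> (y i == 0)].
  rewrite -Idiv_lt_pinfty (le_lt_trans (xs_min _ (fun=> ler01))) //.
  by rewrite Idiv_lt_pinfty; apply/forallP => i; rewrite gt_eqF ?selfconv_gt0.
have Idiv_fin : Idiv y (selfconv xs) \is a fin_num by rewrite /Idiv supp.
apply/esym/scale_optimal_eq; rewrite ?sumr_ge0 // => s s_gt0.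
have := xs_min _ (fun i => mulr_ge0 (sqrtr_ge0 s) (xs_ge0 i)).
rewrite selfconv_scale (sqr_sqrtr (ltW s_gt0)) IdivZr //.
by rewrite -[X in (X <= _)%E]adde0 leeD2lE // lee_fin.
Qed.
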